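(* Let $E>0$ and let $(H_0,H_A,H_B)$ be one of the two choices (a) transverse field: $H_0=E(\sigma_x\otimes I_2+\sigma_y\otimes I_2+I_2\otimes\sigma_x+I_2\otimes\sigma_y)$, $H_A=H_B=E(\sigma_x+\sigma_y)$; (b) longitudinal field: $H_0=E(\sigma_z\otimes I_2+I_2\otimes\sigma_z)$, $H_A=H_B=E\sigma_z$. Let $H_{\mathrm{int}}$ be any Hermitian operator on $\mathbb{C}^2\otimes\mathbb{C}^2$ and $H=H_0+H_{\mathrm{int}}$. Let $\rho$ be a two-qubit density matrix with reduced states $\rho_A=\mathrm{Tr}_B\rho$, $\rho_B=\mathrm{Tr}_A\rho$. If $\mathcal{C}(\rho;H)\ge \mathcal{C}(\rho;H_0)$, then $$\mathcal{C}(\rho_A;H_A)+\mathcal{C}(\rho_B;H_B)\le \mathcal{C}(\rho;H).$$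
   Context: Quantum battery capacity: for a Hermitian $H$ on $\mathbb{C}^d$ with eigenvalues $\epsilon_0\le\epsilon_1\le\dots\le\epsilon_{d-1}$ and a density matrix $\rho$ on $\mathbb{C}^d$ with eigenvalues $\lambda_0\le\lambda_1\le\dots\le\lambda_{d-1}$, $\mathcal{C}(\rho;H)=\sum_{i=0}^{d-1}\epsilon_i(\lambda_i-\lambda_{d-1-i})$. $\sigma_x,\sigma_y,\sigma_z$ are the Pauli matrices and $I_2$ the $2\times 2$ identity. *)

From HB Require Import structures.
From mathcomp Require Import all_boot all_order all_algebra.
From mathcomp Require Import sesquilinear spectral.
From mathcomp.real_closed Require mxtens.
Set Implicit Arguments. Unset Strict Implicit. Unset Printing Implicit Defensive.
Import Order.TTheory GRing.Theory Num.Theory.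
Local Open Scope ring_scope.

(* Complex scalars: an arbitrary numeric closed field C (e.g. complex R for a
   real closed field R, in particular the complex numbers). *)

Definition eigs {C : numClosedFieldType} {d : nat} (A : 'M[C]_d) : seq C :=
  sort <=%R (sval (closed_field_poly_normal (char_poly A))).

Definition capacity {C : numClosedFieldType} {d : nat} (rho H : 'M[C]_d) : C :=
  \sum_(i < d) (eigs H)`_i * ((eigs rho)`_i - (eigs rho)`_(d.-1 - i)).

Definition psdmx {C : numClosedFieldType} {d : nat} (A : 'M[C]_d) : Prop :=
  forall v : 'cV[C]_d, 0 <= ((map_mx Num.conj v)^T *m A *m v) 0 0.

Definition density {C : numClosedFieldType} {d : nat} (rho : 'M[C]_d) : Prop :=
  [/\ rho \is hermsymmx, psdmx rho & \tr rho = 1].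

(* Kronecker product on C^2 (x) C^2, index (a,b) |-> 2a+b *)
Definition kron {C : numClosedFieldType} (A B : 'M[C]_2) : 'M[C]_(2 * 2) :=
  mxtens.tensmx A B.

Definition tidx (a b : 'I_2) : 'I_(2 * 2) := mxtens.mxtens_index (a, b).

Definition ptrB {C : numClosedFieldType} (rho : 'M[C]_(2 * 2)) : 'M[C]_2 :=
  \matrix_(a < 2, a' < 2) \sum_(b < 2) rho (tidx a b) (tidx a' b).
Definition ptrA {C : numClosedFieldType} (rho : 'M[C]_(2 * 2)) : 'M[C]_2 :=
  \matrix_(b < 2, b' < 2) \sum_(a < 2) rho (tidx a b) (tidx a b').

Definition mx2 {C : numClosedFieldType} (a b c d : C) : 'M[C]_2 :=
  \matrix_(i < 2, j < 2)
    if (i == 0 :> nat) then (if (j == 0 :> nat) then a else b)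
    else (if (j == 0 :> nat) then c else d).

Definition sigma_x {C : numClosedFieldType} : 'M[C]_2 := mx2 0 1 1 0.
Definition sigma_y {C : numClosedFieldType} : 'M[C]_2 := mx2 0 (- 'i) 'i 0.
Definition sigma_z {C : numClosedFieldType} : 'M[C]_2 := mx2 1 0 0 (-1).
Definition I2 {C : numClosedFieldType} : 'M[C]_2 := 1%:M.

(* Let H_A = H_B = X have eigenvalues m <= M and H0 = X (x) 1 + 1 (x) X.  Then H0
   has spectrum {2m, m+M, m+M, 2M}, so C(rho; H0) = 2 (M - m) (lam_max - lam_min),
   while C(rho_A; X) = (M - m) (<u|rho_A|u> - <u'|rho_A|u'>) for an eigenframe
   u', u of rho_A, and likewise for rho_B with an eigenframe v', v.  Expanding
   both partial traces in the product frames gives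
     (<u|rho_A|u> - <u'|rho_A|u'>) + (<v|rho_B|v> - <v'|rho_B|v'>)
       = 2 (<uv|rho|uv> - <u'v'|rho|u'v'>) <= 2 (lam_max - lam_min)
   by the Rayleigh bounds, hence C(rho_A; H_A) + C(rho_B; H_B) <= C(rho; H0),
   and the hypothesis C(rho; H0) <= C(rho; H) concludes.  Both choices of H0
   are of this form, with X = E (sigma_x + sigma_y) and X = E sigma_z. *)

From HB Require Import structures.
From mathcomp Require Import all_boot all_order all_algebra.
From mathcomp Require Import perm sesquilinear spectral.
From mathcomp.real_closed Require Import mxtens.
From mathcomp Require Import ring.
Import Order.TTheory GRing.Theory Num.Theory.
Local Open Scope ring_scope.
Local Open Scope sesquilinear_scope.
Set Implicit Arguments. Unset Strict Implicit. Unset Printing Implicit Defensive.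

Section Spectrum.
Variable C : numClosedFieldType.

Lemma unitarymx_mulCmx n (P : 'M[C]_n) : P \is unitarymx -> P^t* *m P = 1%:M.
Proof. by move=> Pu; rewrite -invmx_unitary // mulVmx // unitarymx_unit. Qed.

Lemma hermitian_unitary_diag n (A : 'M[C]_n) : A \is hermsymmx ->
  exists (P : 'M[C]_n) (d : 'rV[C]_n),
    [/\ P \is unitarymx, d \is a realmx & A = P^t* *m diag_mx d *m P].
Proof.
move=> Ah; exists (spectralmx A), (spectral_diag A); split.
- exact: spectral_unitarymx.
- exact: hermitian_spectral_diag_real.
- rewrite -invmx_unitary ?spectral_unitarymx //.
  exact/orthomx_spectralP/hermitian_normalmx.
Qed.

Lemma char_poly_similar n (P Q B : 'M[C]_n) :
  Q *m P = 1%:M -> char_poly (Q *m B *m P) = char_poly B.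
Proof.
move=> QP; rewrite /char_poly /char_poly_mx !map_mxM.
set mQ := map_mx _ Q; set mP := map_mx _ P; set mB := map_mx _ B.
have mQP : mQ *m mP = 1%:M by rewrite -map_mxM QP map_mx1.
have -> : 'X%:M - mQ *m mB *m mP = mQ *m ('X%:M - mB) *m mP.
  rewrite mulmxBr mulmxBl; congr (_ - _).
  by rewrite (scalar_mxC _ mQ) -mulmxA mQP mulmx1.
by rewrite !det_mulmx mulrAC -det_mulmx mQP det1 mul1r.
Qed.

Lemma size_eigs n (A : 'M[C]_n) : size (eigs A) = n.
Proof.
rewrite /eigs size_sort; case: closed_field_poly_normal => r /= Er.
have := size_char_poly A; rewrite Er (monicP (char_poly_monic A)) scale1r.
by rewrite size_prod_XsubC => -[].
Qed.

Definition row_seq n (d : 'rV[C]_n) : seq C := [seq d 0 i | i <- enum 'I_n].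

Lemma eigs_perm_diag n (P Q : 'M[C]_n) (d : 'rV[C]_n) :
  Q *m P = 1%:M -> perm_eq (eigs (Q *m diag_mx d *m P)) (row_seq d).
Proof.
move=> QP; rewrite /eigs; case: closed_field_poly_normal => r /= Er.
rewrite perm_sort; apply: prod_XsubC_eq.
rewrite (monicP (char_poly_monic _)) scale1r char_poly_similar // in Er.
rewrite -Er char_poly_trig ?diag_mx_is_trig // /row_seq big_map big_enum /=.
by apply: eq_bigr => i _; rewrite mxE eqxx mulr1n.
Qed.

Lemma sorted_eigs_diag n (P Q : 'M[C]_n) (d : 'rV[C]_n) :
  Q *m P = 1%:M -> d \is a realmx -> sorted <=%R (eigs (Q *m diag_mx d *m P)).
Proof.
move=> QP dr; apply: (@sort_sorted_in _ (fun x => x \is Num.real)).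
  by move=> x y xr yr; apply: real_leVge.
have := eigs_perm_diag d QP; rewrite perm_sort => /perm_all ->.
by apply/allP => _ /mapP [i _ ->]; apply: mxOverP.
Qed.

Lemma eigs_diag_sorted n (P Q : 'M[C]_n) (d : 'rV[C]_n) (s : seq C) :
  Q *m P = 1%:M -> d \is a realmx -> perm_eq (row_seq d) s -> sorted <=%R s ->
  eigs (Q *m diag_mx d *m P) = s.
Proof.
move=> QP dr ds s_sorted; apply: le_sorted_eq => //; first exact: sorted_eigs_diag.
by rewrite (permPl (eigs_perm_diag d QP)).
Qed.

Definition qform n (A : 'M[C]_n) (w : 'rV[C]_n) : C := (w *m A *m w^t*) 0 0.

Lemma trmxC_mul m n p (A : 'M[C]_(m, n)) (B : 'M[C]_(n, p)) :
  (A *m B)^t* = B^t* *m A^t*.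
Proof. by rewrite trmx_mul map_mxM. Qed.

Lemma qform_unitary_diag n (P : 'M[C]_n) (d : 'rV[C]_n) w :
  qform (P^t* *m diag_mx d *m P) w = \sum_i d 0 i * `|(w *m P^t*) 0 i| ^+ 2.
Proof.
rewrite /qform; have -> : w *m (P^t* *m diag_mx d *m P) *m w^t* =
         w *m P^t* *m diag_mx d *m (w *m P^t*)^t*.
  by rewrite trmxC_mul trmxCK !mulmxA.
by rewrite mxE; apply: eq_bigr => i _; rewrite mul_mx_diag !mxE normCK mulrCA mulrA.
Qed.

Lemma qform_row_unitary n (P : 'M[C]_n) (d : 'rV[C]_n) i :
  P \is unitarymx -> qform (P^t* *m diag_mx d *m P) (row i P) = d 0 i.
Proof.
move=> Pu; rewrite qform_unitary_diag -row_mul (unitarymxP Pu) (bigD1 i) //=.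
rewrite big1 ?addr0 => [|j ji]; first by rewrite !mxE eqxx normr1 expr1n mulr1.
by rewrite !mxE eq_sym (negbTE ji) normr0 expr0n mulr0.
Qed.

Lemma qform_unitary_diag_bounds n (P : 'M[C]_n) (d : 'rV[C]_n) w lo hi :
  P \is unitarymx -> (w *m w^t*) 0 0 = 1 -> (forall i, lo <= d 0 i <= hi) ->
  lo <= qform (P^t* *m diag_mx d *m P) w <= hi.
Proof.
move=> Pu w1 d_bounds; set z := w *m P^t*.
have z1 : \sum_i `|z 0 i| ^+ 2 = 1.
  rewrite -w1; have -> : w *m w^t* = z *m z^t*.
    by rewrite trmxC_mul trmxCK mulmxA -(mulmxA w) unitarymx_mulCmx ?mulmx1.
  by rewrite mxE; apply: eq_bigr => i _; rewrite !mxE normCK.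
rewrite qform_unitary_diag -/z -[lo]mulr1 -[hi]mulr1 -z1 !mulr_sumr.
by apply/andP; split; apply: ler_sum => i _; rewrite ler_wpM2r ?exprn_ge0 //;
  case/andP: (d_bounds i).
Qed.

Lemma qform_eigs_bounds n (A : 'M[C]_n) w : A \is hermsymmx ->
  (w *m w^t*) 0 0 = 1 -> (eigs A)`_0 <= qform A w <= (eigs A)`_n.-1.
Proof.
move=> Ah w1; have [P [d [Pu dr ->]]] := hermitian_unitary_diag Ah.
have PP := unitarymx_mulCmx Pu.
have e_sorted := sorted_eigs_diag PP dr.
apply: qform_unitary_diag_bounds => // i.
have : d 0 i \in eigs (P^t* *m diag_mx d *m P).
  by rewrite (perm_mem (eigs_perm_diag d PP)); apply: map_f; rewrite mem_enum.
case/(nthP 0) => k; rewrite size_eigs => lt_kn <-.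
have lt_0n : (0 < n)%N by case: (n) lt_kn.
by rewrite !(le_sorted_leq_nth 0 e_sorted) ?inE ?size_eigs ?prednK // -ltnS prednK.
Qed.

Lemma rowsub_perm_unitarymx n (s : 'S_n) (Q : 'M[C]_n) :
  Q \is unitarymx -> rowsub s Q \is unitarymx.
Proof.
move=> /unitarymxP QQ; apply/unitarymxP/matrixP => i j.
have := congr1 (fun M : 'M[C]_n => M (s i) (s j)) QQ.
rewrite !mxE (inj_eq perm_inj) => <-; apply: eq_bigr => k _; by rewrite !mxE.
Qed.

Lemma rowsub_perm_unitary_diag n (s : 'S_n) (Q : 'M[C]_n) (d : 'rV[C]_n) :
  (rowsub s Q)^t* *m diag_mx (colsub s d) *m rowsub s Q = Q^t* *m diag_mx d *m Q.
Proof.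
rewrite !mul_mx_diag; apply/matrixP => i j.
rewrite !mxE [RHS](reindex_inj (@perm_inj _ s)) /=.
by apply: eq_bigr => k _; rewrite !mxE.
Qed.

Lemma hermitian2_sorted_diag (X : 'M[C]_2) : X \is hermsymmx ->
  exists (Q : 'M[C]_2) (x : 'rV[C]_2),
    [/\ Q \is unitarymx, x \is a realmx, x 0 0 <= x 0 1 & X = Q^t* *m diag_mx x *m Q].
Proof.
move=> Xh; have [P [d [Pu dr ->]]] := hermitian_unitary_diag Xh.
have d_real i : d 0 i \is Num.real by exact: mxOverP.
have [d01|d10] := boolP (d 0 0 <= d 0 1); first by exists P, d.
exists (rowsub (tperm 0 1) P), (colsub (tperm 0 1) d); split.
- exact: rowsub_perm_unitarymx.
- by apply/mxOverP => i j; rewrite mxE; apply: (mxOverP dr).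
- rewrite !mxE tpermL tpermR.
  by move: (real_leVge (d_real 0) (d_real 1)); rewrite (negbTE d10).
- by rewrite rowsub_perm_unitary_diag.
Qed.

Lemma unitarymx_sum_rows n (P : 'M[C]_n) : P \is unitarymx ->
  \sum_i (row i P)^t* *m row i P = 1%:M.
Proof.
move=> Pu; rewrite -(unitarymx_mulCmx Pu); apply/matrixP => i j.
by rewrite !mxE summxE; apply: eq_bigr => k _; rewrite !mxE big_ord1 !mxE.
Qed.

Lemma unitarymx2_rows (P : 'M[C]_2) : P \is unitarymx ->
  (row 0 P)^t* *m row 0 P + (row 1 P)^t* *m row 1 P = 1%:M.
Proof.
move=> Pu; rewrite -(unitarymx_sum_rows Pu) !big_ord_recl big_ord0 addr0.
by rewrite (_ : lift ord0 ord0 = 1) //; apply: val_inj.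
Qed.

Lemma row_seq2 (x : 'rV[C]_2) : row_seq x = [:: x 0 0; x 0 1].
Proof.
rewrite /row_seq !enum_ordSl enum_ord0 /=.
by congr [:: x 0 _; x 0 _]; apply: val_inj.
Qed.

Lemma eigs2_sorted_diag (Q : 'M[C]_2) (x : 'rV[C]_2) :
  Q \is unitarymx -> x \is a realmx -> x 0 0 <= x 0 1 ->
  eigs (Q^t* *m diag_mx x *m Q) = [:: x 0 0; x 0 1].
Proof.
move=> Qu xr x01; apply: eigs_diag_sorted => //; first exact: unitarymx_mulCmx.
  by rewrite row_seq2.
by rewrite /= x01.
Qed.

Lemma unitarymx_row_norm n (P : 'M[C]_n) i :
  P \is unitarymx -> (row i P *m (row i P)^t*) 0 0 = 1.
Proof. by move=> Pu; rewrite -dotmxE (row_unitarymxP Pu) eqxx. Qed.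

Lemma hermitian2_eigenframe (A : 'M[C]_2) : A \is hermsymmx ->
  exists u u' : 'rV[C]_2, [/\ u^t* *m u + u'^t* *m u' = 1%:M,
    (u *m u^t*) 0 0 = 1, (u' *m u'^t*) 0 0 = 1 &
    eigs A = [:: qform A u'; qform A u]].
Proof.
move=> Ah; have [Q [x [Qu xr x01 ->]]] := hermitian2_sorted_diag Ah.
exists (row 1 Q), (row 0 Q); rewrite !unitarymx_row_norm //; split => //.
  by rewrite addrC unitarymx2_rows.
by rewrite !qform_row_unitary // eigs2_sorted_diag.
Qed.

Lemma capacity2 (rho H : 'M[C]_2) e0 e1 : eigs H = [:: e0; e1] ->
  capacity rho H = (e1 - e0) * ((eigs rho)`_1 - (eigs rho)`_0).
Proof. by move=> eH; rewrite /capacity !big_ord_recl big_ord0 eH /=; ring. Qed.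

Lemma capacity4 (rho H : 'M[C]_(2 * 2)) e0 e1 e3 : eigs H = [:: e0; e1; e1; e3] ->
  capacity rho H = (e3 - e0) * ((eigs rho)`_3 - (eigs rho)`_0).
Proof. by move=> eH; rewrite /capacity !big_ord_recl big_ord0 eH /=; ring. Qed.

End Spectrum.

Section PartialTrace.
Variable C : numClosedFieldType.

Lemma sum_tidx (F : 'I_(2 * 2) -> C) : \sum_k F k = \sum_a \sum_b F (tidx a b).
Proof.
rewrite pair_bigA /= (reindex (@mxtens_index 2 2)) /=; first by apply: eq_bigr => -[].
by exists (@mxtens_unindex 2 2) => k _; rewrite ?mxtens_indexK ?mxtens_unindexK.
Qed.

Lemma sum_mul_delta (F : 'I_2 -> C) b : \sum_b' F b' * (b' == b)%:R = F b.
Proof.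
rewrite (bigD1 b) //= eqxx mulr1 big1 ?addr0 // => b' /negbTE->.
by rewrite mulr0.
Qed.

Lemma mulmx_tens1E (A : 'M[C]_(2 * 2)) (M : 'M[C]_2) i a b :
  (A *m (M *t 1%:M)) i (tidx a b) = \sum_a' A i (tidx a' b) * M a' a.
Proof.
rewrite mxE sum_tidx; apply: eq_bigr => a' _.
rewrite -(sum_mul_delta (fun b' => A i (tidx a' b') * M a' a) b).
by apply: eq_bigr => b' _; rewrite tensmxE mxE mulrA.
Qed.

Lemma mulmx_1tensE (A : 'M[C]_(2 * 2)) (M : 'M[C]_2) i a b :
  (A *m (1%:M *t M)) i (tidx a b) = \sum_b' A i (tidx a b') * M b' b.
Proof.
rewrite mxE sum_tidx (bigD1 a) //= [X in _ + X]big1 => [|a' /negbTE a'a].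
  by rewrite addr0; apply: eq_bigr => b' _; rewrite tensmxE mxE eqxx mul1r.
by apply: big1 => b' _; rewrite tensmxE mxE a'a mul0r mulr0.
Qed.

Lemma mxtrace_ptrB (rho : 'M[C]_(2 * 2)) (M : 'M[C]_2) :
  \tr (ptrB rho *m M) = \tr (rho *m (M *t 1%:M)).
Proof.
rewrite [RHS]/mxtrace sum_tidx; apply: eq_bigr => a _.
under [RHS]eq_bigr do rewrite mulmx_tens1E.
rewrite mxE exchange_big; apply: eq_bigr => a' _.
by rewrite mxE big_distrl.
Qed.

Lemma mxtrace_ptrA (rho : 'M[C]_(2 * 2)) (M : 'M[C]_2) :
  \tr (ptrA rho *m M) = \tr (rho *m (1%:M *t M)).
Proof.
rewrite [RHS]/mxtrace sum_tidx exchange_big; apply: eq_bigr => b _.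
under [RHS]eq_bigr do rewrite mulmx_1tensE.
rewrite mxE exchange_big; apply: eq_bigr => b' _.
by rewrite mxE big_distrl.
Qed.

Lemma qform_mxtrace n (A : 'M[C]_n) w : qform A w = \tr (A *m (w^t* *m w)).
Proof. by rewrite /qform -trace_mx11 -mulmxA mxtrace_mulC -mulmxA. Qed.

Lemma tensmx_trC_mul m n (u : 'rV[C]_m) (v : 'rV[C]_n) :
  (u *t v)^t* *m (u *t v) = (u^t* *m u) *t (v^t* *m v).
Proof. by rewrite -tensmx_mul trmx_tens map_mxT. Qed.

Lemma tensmxDl m n p q (A B : 'M[C]_(m, n)) (M : 'M[C]_(p, q)) :
  (A + B) *t M = A *t M + B *t M.
Proof. by apply/matrixP => i j; rewrite !mxE mulrDl. Qed.

Lemma tensmxDr m n p q (A : 'M[C]_(m, n)) (M N : 'M[C]_(p, q)) :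
  A *t (M + N) = A *t M + A *t N.
Proof. by apply/matrixP => i j; rewrite !mxE mulrDr. Qed.

Lemma tensmxZl m n p q a (A : 'M[C]_(m, n)) (M : 'M[C]_(p, q)) :
  (a *: A) *t M = a *: (A *t M).
Proof. by apply/matrixP => i j; rewrite !mxE mulrA. Qed.

Lemma tensmxZr m n p q a (A : 'M[C]_(m, n)) (M : 'M[C]_(p, q)) :
  A *t (a *: M) = a *: (A *t M).
Proof. by apply/matrixP => i j; rewrite !mxE mulrCA. Qed.

Lemma qform_ptr_gap (rho : 'M[C]_(2 * 2)) (u u' v v' : 'rV[C]_2) :
  u^t* *m u + u'^t* *m u' = 1%:M -> v^t* *m v + v'^t* *m v' = 1%:M ->
  qform (ptrB rho) u - qform (ptrB rho) u' + (qform (ptrA rho) v - qform (ptrA rho) v') =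
  2 * (qform rho (u *t v) - qform rho (u' *t v')).
Proof.
move=> u_frame v_frame; rewrite !qform_mxtrace !mxtrace_ptrB !mxtrace_ptrA.
rewrite -{1 2}v_frame -{1 2}u_frame !tensmx_trC_mul.
rewrite !tensmxDl !tensmxDr !mulmxDr !mxtraceD.
by ring.
Qed.

Lemma tensmx11 m n : (1%:M : 'M[C]_m) *t (1%:M : 'M[C]_n) = 1%:M.
Proof.
apply/matrixP => i j.
case: (mxtens_indexP i) => a b; case: (mxtens_indexP j) => a' b'.
rewrite tensmxE !mxE (can_eq (@mxtens_indexK m n)) xpair_eqE.
by case: (a == a'); case: (b == b'); rewrite ?mulr1 ?mulr0.
Qed.

Lemma tensmx_unitary m n (A : 'M[C]_m) (B : 'M[C]_n) :
  A \is unitarymx -> B \is unitarymx -> A *t B \is unitarymx.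
Proof.
move=> /unitarymxP AA /unitarymxP BB; apply/unitarymxP.
by rewrite trmx_tens map_mxT tensmx_mul AA BB tensmx11.
Qed.

Definition row_tensD m n (x : 'rV[C]_m) (y : 'rV[C]_n) : 'rV[C]_(m * n) :=
  \row_k (x 0 (mxtens_unindex k).1 + y 0 (mxtens_unindex k).2).

Lemma diag_mx_tensD m n (x : 'rV[C]_m) (y : 'rV[C]_n) :
  diag_mx x *t 1%:M + 1%:M *t diag_mx y = diag_mx (row_tensD x y).
Proof.
apply/matrixP => i j.
case: (mxtens_indexP i) => a b; case: (mxtens_indexP j) => a' b'.
rewrite !(tensmxE, mxE) (can_eq (@mxtens_indexK m n)) xpair_eqE mxtens_indexK /=.
by case: eqP => [->|_]; case: eqP => [->|_]; rewrite ?mulr1 ?mulr0 ?mul1r ?mul0r ?addr0.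
Qed.

Lemma tensD_unitary_diag m n (Q : 'M[C]_m) (R : 'M[C]_n) x y :
  Q \is unitarymx -> R \is unitarymx ->
  (Q^t* *m diag_mx x *m Q) *t 1%:M + 1%:M *t (R^t* *m diag_mx y *m R) =
  (Q *t R)^t* *m diag_mx (row_tensD x y) *m (Q *t R).
Proof.
move=> Qu Ru; rewrite -diag_mx_tensD mulmxDr mulmxDl trmx_tens map_mxT !tensmx_mul.
by rewrite !mulmx1 !unitarymx_mulCmx.
Qed.

Lemma tensmx_row_norm m n (u : 'rV[C]_m) (v : 'rV[C]_n) :
  ((u *t v) *m (u *t v)^t*) 0 0 = (u *m u^t*) 0 0 * (v *m v^t*) 0 0.
Proof.
rewrite trmx_tens map_mxT tensmx_mul mxE.
by rewrite (ord1 (mxtens_unindex _).1) (ord1 (mxtens_unindex _).2).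
Qed.

Lemma row_seq_tensD2 (x y : 'rV[C]_2) :
  row_seq (row_tensD x y) =
    [:: x 0 0 + y 0 0; x 0 0 + y 0 1; x 0 1 + y 0 0; x 0 1 + y 0 1].
Proof.
rewrite /row_seq !enum_ordSl enum_ord0 /= !mxE.
by congr [:: x 0 _ + y 0 _; x 0 _ + y 0 _; x 0 _ + y 0 _; x 0 _ + y 0 _];
  apply: val_inj.
Qed.

Lemma eigs_kron_sum2 (Q : 'M[C]_2) (x : 'rV[C]_2) (X := Q^t* *m diag_mx x *m Q) :
  Q \is unitarymx -> x \is a realmx -> x 0 0 <= x 0 1 ->
  eigs (kron X I2 + kron I2 X) =
    [:: x 0 0 + x 0 0; x 0 0 + x 0 1; x 0 0 + x 0 1; x 0 1 + x 0 1].
Proof.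
move=> Qu xr x01; rewrite /kron /I2 tensD_unitary_diag //.
apply: eigs_diag_sorted.
- exact/unitarymx_mulCmx/tensmx_unitary.
- by apply/mxOverP => i j; rewrite mxE; apply: realD; apply: (mxOverP xr).
- by rewrite row_seq_tensD2 [x 0 1 + _]addrC.
- by rewrite /= lexx !lerD2l lerD2r x01.
Qed.

End PartialTrace.

Section LocalHamiltonian.
Variable C : numClosedFieldType.

Lemma hermsymmxP n (A : 'M[C]_n) :
  reflect (forall i j, A i j = (A j i)^*) (A \is hermsymmx).
Proof.
rewrite qualifE expr0 scale1r; apply: (iffP eqP) => [AA i j|AA].
  by rewrite {1}AA !mxE.
by apply/matrixP => i j; rewrite !mxE AA.
Qed.

Lemma ptrB_hermitian (rho : 'M[C]_(2 * 2)) : rho \is hermsymmx -> ptrB rho \is hermsymmx.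
Proof.
move=> /hermsymmxP rhoh; apply/hermsymmxP => a a'.
by rewrite !mxE rmorph_sum; apply: eq_bigr => b _; rewrite rhoh.
Qed.

Lemma ptrA_hermitian (rho : 'M[C]_(2 * 2)) : rho \is hermsymmx -> ptrA rho \is hermsymmx.
Proof.
move=> /hermsymmxP rhoh; apply/hermsymmxP => b b'.
by rewrite !mxE rmorph_sum; apply: eq_bigr => a _; rewrite rhoh.
Qed.

Lemma capacity_ptr_le (X : 'M[C]_2) (rho : 'M[C]_(2 * 2)) :
  X \is hermsymmx -> rho \is hermsymmx ->
  capacity (ptrB rho) X + capacity (ptrA rho) X <= capacity rho (kron X I2 + kron I2 X).
Proof.
move=> Xh rhoh; have [Q [x [Qu xr x01 EX]]] := hermitian2_sorted_diag Xh.
have [u [u' [u_frame u1 u'1 eA]]] := hermitian2_eigenframe (ptrB_hermitian rhoh).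
have [v [v' [v_frame v1 v'1 eB]]] := hermitian2_eigenframe (ptrA_hermitian rhoh).
have uv1 : ((u *t v) *m (u *t v)^t*) 0 0 = 1 by rewrite tensmx_row_norm u1 v1 mulr1.
have u'v'1 : ((u' *t v') *m (u' *t v')^t*) 0 0 = 1.
  by rewrite tensmx_row_norm u'1 v'1 mulr1.
have /andP[_ top] := qform_eigs_bounds rhoh uv1.
have /andP[bot _] := qform_eigs_bounds rhoh u'v'1.
rewrite EX !(capacity2 _ (eigs2_sorted_diag Qu xr x01)).
rewrite (capacity4 _ (eigs_kron_sum2 Qu xr x01)) eA eB /= -mulrDr qform_ptr_gap //.
have -> : x 0 1 + x 0 1 - (x 0 0 + x 0 0) = (x 0 1 - x 0 0) * 2 by ring.
by rewrite -mulrA ler_wpM2l ?subr_ge0 // ler_wpM2l // lerB.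
Qed.

Lemma scale_hermsymmx n (E : C) (A : 'M[C]_n) :
  E \is Num.real -> A \is hermsymmx -> E *: A \is hermsymmx.
Proof.
move=> /CrealP Er /hermsymmxP AA; apply/hermsymmxP => i j.
by rewrite !mxE rmorphM /= Er -AA.
Qed.

Lemma sigma_xy_hermitian : (sigma_x + sigma_y : 'M[C]_2) \is hermsymmx.
Proof.
apply/hermsymmxP => i j; rewrite !mxE.
have conj_1i : (1 + 'i : C)^* = 1 - 'i by rewrite rmorphD /= conjC1 conjCi.
have conj_1Ni : (1 - 'i : C)^* = 1 + 'i by rewrite rmorphB /= conjC1 conjCi opprK.
by case: i => [[|[|//]] ?]; case: j => [[|[|//]] ?] /=;
  rewrite ?(addr0, add0r, conjC0, conj_1i, conj_1Ni).
Qed.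

Lemma sigma_z_hermitian : (sigma_z : 'M[C]_2) \is hermsymmx.
Proof.
apply/hermsymmxP => i j; rewrite !mxE.
by case: i => [[|[|//]] ?]; case: j => [[|[|//]] ?] /=;
  rewrite ?(conjC0, conjC1, rmorphN1).
Qed.

Lemma kronD_scale (E : C) (X : 'M[C]_2) :
  E *: (kron X I2 + kron I2 X) = kron (E *: X) I2 + kron I2 (E *: X).
Proof. by rewrite /kron tensmxZl tensmxZr scalerDr. Qed.

End LocalHamiltonian.

Local Close Scope sesquilinear_scope.

Theorem theorem1 (C : numClosedFieldType) (E : C)
    (H0 Hint rho : 'M[C]_(2 * 2)) (HA HB : 'M[C]_2) :
  0 < E ->
  (  (H0 = E *: (kron sigma_x I2 + kron sigma_y I2 + kron I2 sigma_x + kron I2 sigma_y)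
      /\ HA = E *: (sigma_x + sigma_y) /\ HB = E *: (sigma_x + sigma_y))
  \/ (H0 = E *: (kron sigma_z I2 + kron I2 sigma_z)
      /\ HA = E *: sigma_z /\ HB = E *: sigma_z) ) ->
  Hint \is hermsymmx ->
  density rho ->
  capacity rho H0 <= capacity rho (H0 + Hint) ->
  capacity (ptrB rho) HA + capacity (ptrA rho) HB <= capacity rho (H0 + Hint).
Proof.
move=> E_gt0 H_cases _ [rhoh _ _]; apply: le_trans.
have Er : E \is Num.real by exact: gtr0_real.
case: H_cases => [[-> [-> ->]] | [-> [-> ->]]].
  have -> : kron sigma_x I2 + kron sigma_y I2 + kron I2 sigma_x + kron I2 sigma_y =
            kron (sigma_x + sigma_y) I2 + kron I2 (sigma_x + sigma_y) :> 'M[C]_(2 * 2).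
    by rewrite /kron tensmxDl tensmxDr !addrA.
  by rewrite kronD_scale capacity_ptr_le ?scale_hermsymmx ?sigma_xy_hermitian.
by rewrite kronD_scale capacity_ptr_le ?scale_hermsymmx ?sigma_z_hermitian.
Qed.
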